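(* Suppose $(A,W)$ is a $T_1$ Pratt comonoid which is generated by a countably infinite family $S$ of subsets of $A$ that satisfy no nontrivial distributive lattice relations (i.e., $S$ is a set of free generators of a free distributive lattice). Then $W$ has at least continuum cardinality, and in fact $W$ contains a complete sublattice isomorphic to the lattice of all subsets of $\omega$.
   Context: A Pratt comonoid is a pair $(A,W)$ where $A$ is a set and $W$ is a set of subsets of $A$ such that (i) $\emptyset\in W$ and $A\in W$; (ii) whenever $C\subseteq A\times A$ is such that for every $a\in A$ both the $a$-th row $\{b\mid (a,b)\in C\}$ and the $a$-th column $\{b\mid (b,a)\in C\}$ belong to $W$ (a crossword over $W$), the diagonal $\{b\mid (b,b)\in C\}$ also belongs to $W$. $(A,W)$ is $T_1$ if for all distinct $a,b\in A$ some member of $W$ contains $a$ but not $b$. $(A,W)$ is generated by a family $S$ of subsets of $A$ if $W$ is the least Pratt comonoid structure on $A$ containing $S$ (Pratt comonoid structures on $A$ are closed under arbitrary intersections). A complete sublattice of $W$ is a subset of $W$ closed under arbitrary (possibly infinite) unions and intersections taken in the power set of $A$, not necessarily containing $\emptyset$ or $A$. *)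

From HB Require Import structures.
From mathcomp Require Import all_boot all_order.
From mathcomp Require Import boolp classical_sets.
Set Implicit Arguments. Unset Strict Implicit. Unset Printing Implicit Defensive.
Import Order.TTheory.
Local Open Scope classical_set_scope.

Definition crossword {A : Type} (W : set (set A)) (C : set (A * A)) : Prop :=
  forall a : A, W [set b | C (a, b)] /\ W [set b | C (b, a)].

Definition pratt_comonoid {A : Type} (W : set (set A)) : Prop :=
  W set0 /\ W setT /\
  forall C : set (A * A), crossword W C -> W [set b | C (b, b)].

Definition pratt_T1 {A : Type} (W : set (set A)) : Prop :=
  forall a b : A, a <> b -> exists U, W U /\ U a /\ ~ U b.

Definition pratt_generated_by {A : Type} (W S : set (set A)) : Prop :=
  pratt_comonoid W /\ S `<=` W /\
  forall W' : set (set A), pratt_comonoid W' -> S `<=` W' -> W `<=` W'.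

Inductive lterm : Type :=
| LVar of nat
| LMeet of lterm & lterm
| LJoin of lterm & lterm.

Fixpoint eval_set {A : Type} (s : nat -> set A) (t : lterm) : set A :=
  match t with
  | LVar n => s n
  | LMeet t1 t2 => eval_set s t1 `&` eval_set s t2
  | LJoin t1 t2 => eval_set s t1 `|` eval_set s t2
  end.

Fixpoint eval_lat {d : Order.disp_t} {L : latticeType d} (v : nat -> L)
    (t : lterm) : L :=
  match t with
  | LVar n => v n
  | LMeet t1 t2 => Order.meet (eval_lat v t1) (eval_lat v t2)
  | LJoin t1 t2 => Order.join (eval_lat v t1) (eval_lat v t2)
  end.

Definition distr_identity (t1 t2 : lterm) : Prop :=
  forall (d : Order.disp_t) (L : distrLatticeType d) (v : nat -> L),
    eval_lat v t1 = eval_lat v t2.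

(* The family s satisfies no nontrivial distributive lattice relations:
   every lattice relation among the s n is a distributive-lattice identity,
   i.e. the s n freely generate a free distributive lattice. *)
Definition distr_free {A : Type} (s : nat -> set A) : Prop :=
  forall t1 t2 : lterm, eval_set s t1 = eval_set s t2 -> distr_identity t1 t2.

Definition complete_sublattice {A : Type} (L : set (set A)) : Prop :=
  forall F : set (set A), F `<=` L -> F !=set0 ->
    L (\bigcup_(X in F) X) /\ L (\bigcap_(X in F) X).

(* Fix a point a.  Every member of W is upward closed for the specialisation
   preorder of the generators, so the T_1 axiom makes the generators separate
   points, and freeness then forces a to lie outside infinitely many generators
   s (p k) and inside infinitely many s (q k).  For N a set of naturals, embed N
   consists of the x such that, whenever x lies in no generator below p k that
   misses a, x contains every generator below q k that contains a, and also
   s (q k) unless k is in N.  It is the diagonal of the crossword given by the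
   symmetrised relation linked N.  A row of that crossword only involves finitely
   many k, because a point other than a is separated from a in both directions,
   so it is a finite Boolean combination of generators and lies in W.  Finally
   embed commutes with nonempty unions and intersections, and for k in N but not
   in M freeness yields a point of embed N outside embed M. *)

From HB Require Import structures.
From mathcomp Require Import all_boot all_order.
From mathcomp Require Import boolp classical_sets.
Set Implicit Arguments. Unset Strict Implicit. Unset Printing Implicit Defensive.
Local Open Scope classical_set_scope.

Section PrattClosure.
Variables (A : Type) (W : set (set A)).
Hypothesis W_pratt : pratt_comonoid W.

Lemma pratt_set0 : W set0. Proof. by case: W_pratt. Qed.
Lemma pratt_setT : W setT. Proof. by case: W_pratt => _ []. Qed.

Lemma pratt_diag (C : set (A * A)) : crossword W C -> W [set b | C (b, b)].
Proof. by case: W_pratt => _ [_]; apply. Qed.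

Lemma pratt_condI (P : Prop) (X : set A) : W X -> W ([set _ | P] `&` X).
Proof.
move=> WX; have [/propT->|/propF->] := pselect P.
  by rewrite setTI.
by rewrite set0I; exact: pratt_set0.
Qed.

Lemma pratt_condU (P : Prop) (X : set A) : W X -> W ([set _ | P] `|` X).
Proof.
move=> WX; have [/propT->|/propF->] := pselect P.
  by rewrite setTU; exact: pratt_setT.
by rewrite set0U.
Qed.

Lemma pratt_imply (P : Prop) (X : set A) : W X -> W [set y | P -> X y].
Proof.
move=> WX; have [/propT->|/propF->] := pselect P.
  by rewrite (_ : [set y | True -> X y] = X) //; apply/seteqP; split=> y //=; apply.
rewrite (_ : [set y | False -> X y] = setT); first exact: pratt_setT.
by apply/seteqP; split=> y // _ [].
Qed.

Lemma pratt_setI (U V : set A) : W U -> W V -> W (U `&` V).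
Proof.
move=> WU WV; apply: (@pratt_diag (fun xy => U xy.1 /\ V xy.2)) => x; split.
  exact: (@pratt_condI (U x) V).
by rewrite -[X in W X]/(U `&` [set _ | V x]) setIC; exact: pratt_condI.
Qed.

Lemma pratt_setU (U V : set A) : W U -> W V -> W (U `|` V).
Proof.
move=> WU WV; apply: (@pratt_diag (fun xy => U xy.1 \/ V xy.2)) => x; split.
  exact: (@pratt_condU (U x) V).
by rewrite -[X in W X]/(U `|` [set _ | V x]) setUC; exact: pratt_condU.
Qed.

Lemma pratt_bigcap_lt (n : nat) (F : nat -> set A) :
  (forall i, W (F i)) -> W [set y | forall i, (i < n)%N -> F i y].
Proof.
move=> WF; elim: n => [|n IH].
  rewrite (_ : [set y | _] = setT); first exact: pratt_setT.
  by apply/funext => y; apply/propT.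
rewrite (_ : [set y | _] = [set y | forall i, (i < n)%N -> F i y] `&` F n).
  exact: pratt_setI.
apply/seteqP; split => y /=.
  by move=> h; split=> [i lt_in|]; apply: h; rewrite // ltnS ltnW.
by move=> [h Fny] i; rewrite ltnS leq_eqVlt => /predU1P [->|/h].
Qed.

Lemma pratt_bigcup_lt (n : nat) (F : nat -> set A) :
  (forall i, W (F i)) -> W [set y | exists2 i, (i < n)%N & F i y].
Proof.
move=> WF; elim: n => [|n IH].
  rewrite (_ : [set y | _] = set0); first exact: pratt_set0.
  by apply/funext => y; apply/propF => -[].
rewrite (_ : [set y | _] = [set y | exists2 i, (i < n)%N & F i y] `|` F n).
  exact: pratt_setU.
apply/seteqP; split => y /=.
  move=> [i]; rewrite ltnS leq_eqVlt => /predU1P [->|lt_in Fiy]; first by right.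
  by left; exists i.
by move=> [[i lt_in Fiy]|Fny]; [exists i; rewrite // ltnS ltnW | exists n].
Qed.

End PrattClosure.

Definition upsets (A : Type) (s : nat -> set A) : set (set A) :=
  [set U | forall u v, (forall i, s i u -> s i v) -> U u -> U v].

Lemma upsets_pratt (A : Type) (s : nat -> set A) : pratt_comonoid (upsets s).
Proof.
split; first by move=> u v _.
split; first by move=> u v _.
move=> C Cxw u v le_uv /= Cuu.
have [row_u _] := Cxw u; have [_ col_v] := Cxw v.
exact: col_v u v le_uv (row_u u v le_uv Cuu).
Qed.

Lemma generated_upsets (A : Type) (W : set (set A)) (s : nat -> set A) :
  pratt_generated_by W (range s) -> W `<=` upsets s.
Proof.
case=> _ [_ Wmin]; apply: Wmin; first exact: upsets_pratt.
by move=> _ [i _ <-] u v; apply.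
Qed.

Lemma generators_separate (A : Type) (W : set (set A)) (s : nat -> set A) :
  pratt_T1 W -> pratt_generated_by W (range s) ->
  forall u v, u <> v -> exists i, s i u /\ ~ s i v.
Proof.
move=> WT1 Wgen u v /WT1 [U [WU [Uu NUv]]]; apply: contrapT => Nsep.
have Uup : upsets s U := generated_upsets Wgen WU.
apply/NUv/(Uup u v) => // i siu.
by apply: contrapT => nsiv; apply: Nsep; exists i.
Qed.

Fixpoint lmeet (i0 : nat) (l : seq nat) : lterm :=
  if l is j :: l' then LMeet (LVar i0) (lmeet j l') else LVar i0.
Fixpoint ljoin (i0 : nat) (l : seq nat) : lterm :=
  if l is j :: l' then LJoin (LVar i0) (ljoin j l') else LVar i0.

Lemma eval_set_lmeet (A : Type) (s : nat -> set A) i0 l x :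
  eval_set s (lmeet i0 l) x <-> forall i, i \in i0 :: l -> s i x.
Proof.
elim: l i0 => [|j l IH] i0 /=.
  split=> [si0x i|]; first by rewrite inE => /eqP->.
  by apply; rewrite inE.
split=> [[si0x /IH sl] i|sl].
  by rewrite inE => /predU1P [->|/sl].
by split; [exact/sl/mem_head | apply/IH => i il; apply: sl; rewrite in_cons il orbT].
Qed.

Lemma eval_set_ljoin (A : Type) (s : nat -> set A) i0 l x :
  eval_set s (ljoin i0 l) x <-> exists2 i, i \in i0 :: l & s i x.
Proof.
elim: l i0 => [|j l IH] i0 /=.
  split=> [si0x|[i]]; first by exists i0; rewrite ?inE.
  by rewrite inE => /eqP->.
split=> [[si0x|/IH [i il six]]|[i]]; last rewrite inE => /predU1P [->|il] six.
- by exists i0; rewrite ?mem_head.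
- by exists i; rewrite // in_cons il orbT.
- by left.
- by right; apply/IH; exists i.
Qed.

Lemma eval_lat_lmeet (v : nat -> bool) i0 l : eval_lat v (lmeet i0 l) = all v (i0 :: l).
Proof. by elim: l i0 => [|j l IH] i0 /=; rewrite ?andbT // IH. Qed.

Lemma eval_lat_ljoin (v : nat -> bool) i0 l : eval_lat v (ljoin i0 l) = has v (i0 :: l).
Proof. by elim: l i0 => [|j l IH] i0 /=; rewrite ?orbF // IH. Qed.

Lemma distr_free_profile (A : Type) (s : nat -> set A) (P : nat -> Prop) (n : nat) :
  distr_free s -> exists x, forall i, (i < n)%N -> (s i x <-> P i).
Proof.
move=> s_free; apply: contrapT => Nx.
pose I := [seq i <- iota 0 n | `[< P i >]].
pose J := [seq i <- iota 0 n | ~~ `[< P i >]].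
have mem_I i : (i < n)%N -> P i -> i \in n :: I.
  move=> lt_in /asboolP Pi.
  by rewrite in_cons mem_filter mem_iota add0n leq0n lt_in Pi orbT.
have mem_J i : (i < n)%N -> ~ P i -> i \in n.+1 :: J.
  move=> lt_in /asboolPn NPi.
  by rewrite in_cons mem_filter mem_iota add0n leq0n lt_in NPi orbT.
have NIJ : ~~ has (mem (n :: I)) (n.+1 :: J).
  apply/hasPn => j; rewrite in_cons => /predU1P [->|].
    rewrite /= in_cons mem_filter mem_iota add0n (gtn_eqF (ltnSn n)).
    by rewrite ltnNge leqnSn !andbF.
  rewrite /J mem_filter mem_iota add0n /= in_cons mem_filter mem_iota add0n.
  by case/andP => /negbTE-> lt_jn; rewrite (ltn_eqF lt_jn).
(* The fresh variables n and n.+1 keep both terms nonempty (lterm has no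
   constants); the identity fails in bool when exactly the variables of the
   meet are true. *)
have /s_free/(_ _ bool (mem (n :: I))) :
    eval_set s (LJoin (lmeet n I) (ljoin n.+1 J)) = eval_set s (ljoin n.+1 J).
  apply/seteqP; split=> x /=; last by right.
  case=> // /eval_set_lmeet sIx; apply/eval_set_ljoin; apply: contrapT => NsJx.
  apply: Nx; exists x => i lt_in; split=> [six|Pi]; last exact/sIx/mem_I.
  by apply: contrapT => NPi; apply: NsJx; exists i => //; apply: mem_J.
rewrite /= eval_lat_lmeet eval_lat_ljoin (negbTE NIJ).
by have -> : all (mem (n :: I)) (n :: I) by apply/allP.
Qed.

Lemma homo_ltn_id_le (f : nat -> nat) :
  {homo f : m n / (m < n)%N} -> forall n, (n <= f n)%N.
Proof. by move=> f_homo; elim=> // n IH; apply: leq_ltn_trans IH (f_homo _ _ _). Qed.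

Lemma unbounded_enum (P : nat -> Prop) :
  (forall m, exists2 i, (m <= i)%N & P i) ->
  exists f : nat -> nat, {homo f : m n / (m < n)%N} /\ forall n, P (f n).
Proof.
move=> /(_ _)/cid2-/all_sig [g gP].
exists (fun n => iter n.+1 (fun m => g m.+1) 0); split; last by move=> n; exact: (gP _).2.
by apply: homo_ltn => [y x z|n]; [exact: ltn_trans | exact: (gP _).1].
Qed.

Section GeneratorProfiles.
Variables (A : Type) (W : set (set A)) (s : nat -> set A).
Hypotheses (W_T1 : pratt_T1 W) (W_gen : pratt_generated_by W (range s)).
Hypothesis s_free : distr_free s.

Lemma zeros_unbounded (a : A) m : exists2 i, (m <= i)%N & ~ s i a.
Proof.
apply: contrapT => Nunb.
have ones_from i : (m <= i)%N -> s i a.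
  by move=> le_mi; apply: contrapT => Nsia; apply: Nunb; exists i.
have [x x_prof] := distr_free_profile (fun i => (i < m)%N /\ s i a) m.+1 s_free.
have Nxa : x <> a.
  move=> xa; have [+ _] := x_prof m (ltnSn m).
  by rewrite xa => /(_ (ones_from m (leqnn m))) [+ _]; rewrite ltnn.
have [i [six Nsia]] := generators_separate W_T1 W_gen Nxa.
have [lt_im|/ones_from //] := ltnP i m.
by apply: Nsia; have [/(_ six) []] := x_prof i (ltnW lt_im).
Qed.

Lemma ones_unbounded (a : A) m : exists2 i, (m <= i)%N & s i a.
Proof.
apply: contrapT => Nunb.
have zeros_from i : (m <= i)%N -> ~ s i a by move=> le_mi sia; apply: Nunb; exists i.
have [x x_prof] := distr_free_profile (fun i => (i < m)%N -> s i a) m.+1 s_free.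
have Nax : a <> x.
  move=> ax; have [_ +] := x_prof m (ltnSn m).
  by rewrite -ax => sma; apply/(zeros_from m (leqnn m))/sma; rewrite ltnn.
have [i [sia Nsix]] := generators_separate W_T1 W_gen Nax.
have [lt_im|/zeros_from //] := ltnP i m.
by apply: Nsix; have [_ /(_ (fun=> sia))] := x_prof i (ltnW lt_im).
Qed.

End GeneratorProfiles.

Section Embedding.
Variables (A : Type) (s : nat -> set A) (a : A) (p q : nat -> nat).

Definition ones_below (j : nat) : set A :=
  [set y | forall i, (i < j)%N -> s i a -> s i y].

Definition gains_below (j : nat) : set A :=
  [set y | exists2 i, (i < j)%N & ~ s i a /\ s i y].

Definition keeps (N : set nat) (k : nat) : set A :=
  ones_below (q k).+1 `|` ([set _ | N k] `&` ones_below (q k)).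

Definition linked (N : set nat) (x y : A) : Prop :=
  forall k, ~ gains_below (p k) x -> keeps N k y.

Definition embed (N : set nat) : set A := [set x | linked N x x].

Lemma ones_below_le i j : (i <= j)%N -> ones_below j `<=` ones_below i.
Proof. by move=> le_ij y yj k lt_ki; apply: yj; apply: leq_trans le_ij. Qed.

Lemma keeps_ones_below N k : keeps N k `<=` ones_below (q k).
Proof. by move=> y [/ones_below_le|[_]]; apply. Qed.

Lemma linked_to_a N y : linked N y a.
Proof. by move=> k _; left. Qed.

Lemma linked_mono N M x y : N `<=` M -> linked N x y -> linked M x y.
Proof. by move=> NM xNy k /xNy [|[/NM]]; [left | right]. Qed.

Lemma embed_mono N M : N `<=` M -> embed N `<=` embed M.
Proof. by move=> NM x; apply: linked_mono. Qed.

Hypotheses (p_homo : {homo p : m n / (m < n)%N}) (q_homo : {homo q : m n / (m < n)%N}).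

Section InPratt.
Variable W : set (set A).
Hypotheses (W_pratt : pratt_comonoid W) (W_s : forall i, W (s i)).
Hypothesis s_sep : forall u v, u <> v -> exists i, s i u /\ ~ s i v.

Lemma W_ones_below j : W (ones_below j).
Proof. by apply: (pratt_bigcap_lt W_pratt) => i; apply: (pratt_imply W_pratt). Qed.

Lemma W_gains_below j : W (gains_below j).
Proof.
by apply: (pratt_bigcup_lt W_pratt) => i; apply: (pratt_condI W_pratt (~ s i a)).
Qed.

Lemma W_keeps N k : W (keeps N k).
Proof.
by apply: (pratt_setU W_pratt); [|apply: (pratt_condI W_pratt)]; apply: W_ones_below.
Qed.

Lemma W_linked_from N x i0 : s i0 x -> ~ s i0 a -> W [set y | linked N x y].
Proof.
move=> si0x Nsi0a.
rewrite (_ : [set y | _] =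
    [set y | forall k, (k < i0.+1)%N -> (~ gains_below (p k) x -> keeps N k y)]).
  by apply: (pratt_bigcap_lt W_pratt) => k; apply/(pratt_imply W_pratt)/W_keeps.
apply/seteqP; split=> y xNy k; first by move=> _; apply: xNy.
have [lt_k|le_k Nxk] := ltnP k i0.+1; first exact: xNy.
by exfalso; apply: Nxk; exists i0 => //; apply: leq_trans le_k (homo_ltn_id_le p_homo k).
Qed.

Lemma W_linked_to N x o : s o a -> ~ s o x -> W [set y | linked N y x].
Proof.
move=> soa Nsox.
have Nkeeps k : (o < k)%N -> ~ keeps N k x.
  move=> lt_ok /keeps_ones_below xk; apply/Nsox/xk => //.
  exact: leq_trans lt_ok (homo_ltn_id_le q_homo k).
rewrite (_ : [set y | _] =
    [set y | forall k, (k < o.+2)%N -> (~ keeps N k x -> gains_below (p k) y)]).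
  by apply: (pratt_bigcap_lt W_pratt) => k; apply/(pratt_imply W_pratt)/W_gains_below.
apply/seteqP; split=> y yNx k.
  by move=> _ Nxk; apply: contrapT => /yNx.
move=> Nyk; apply: contrapT => Nxk; apply: Nyk.
have [lt_k|le_k] := ltnP k o.+2; first exact: yNx.
have [i lt_i yi] := yNx o.+1 (ltnSn _) (Nkeeps _ (ltnSn o)).
by exists i => //; apply: ltn_trans lt_i (p_homo le_k).
Qed.

Lemma W_embed N : W (embed N).
Proof.
have W_row x : W ([set y | linked N x y] `|` [set y | linked N y x]).
  have [->|Nxa] := pselect (x = a).
    rewrite (_ : _ `|` _ = setT); first exact: pratt_setT W_pratt.
    by apply/seteqP; split=> // y _; right; apply: linked_to_a.
  have [i0 [si0x Nsi0a]] := s_sep Nxa; have [o [soa Nsox]] := s_sep (nesym Nxa).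
  apply: (pratt_setU W_pratt); first exact: W_linked_from si0x Nsi0a.
  exact: W_linked_to soa Nsox.
rewrite (_ : embed N = [set x | linked N x x \/ linked N x x]).
  apply: (pratt_diag W_pratt (C := fun xy => linked N xy.1 xy.2 \/ linked N xy.2 xy.1)).
  move=> x; split; first exact: W_row.
  by rewrite -[X in W X]/([set y | linked N y x] `|` [set y | linked N x y]) setUC.
by apply/seteqP; split=> x /=; [left | case].
Qed.

End InPratt.

Lemma embed_bigcup (NN : set (set nat)) : NN !=set0 ->
  embed (\bigcup_(N in NN) N) = \bigcup_(N in NN) embed N.
Proof.
move=> [N0 NN_N0]; apply/seteqP; split=> x; last first.
  by case=> N NN_N; apply: embed_mono => k Nk; exists N.
move=> xUx; have [[k0 [Nx_k0 Nones_k0]]|] :=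
  pselect (exists k, ~ gains_below (p k) x /\ ~ ones_below (q k).+1 x).
  have [//|[[N NN_N Nk0] ones_k0]] := xUx k0 Nx_k0.
  exists N => // k Nx_k; have [lt_kk0|lt_k0k|->] := ltngtP k k0; last by right.
    by left; apply: ones_below_le ones_k0; apply: q_homo.
  by exfalso; apply/Nones_k0/(ones_below_le (q_homo lt_k0k))/keeps_ones_below/xUx.
move=> Nbad; exists N0 => // k Nx_k; left; apply: contrapT => Nones_k.
by apply: Nbad; exists k.
Qed.

Lemma embed_bigcap (NN : set (set nat)) : NN !=set0 ->
  embed (\bigcap_(N in NN) N) = \bigcap_(N in NN) embed N.
Proof.
move=> [N0 NN_N0]; apply/seteqP; split=> x.
  by move=> xIx N NN_N; apply: embed_mono xIx => k; apply.
move=> xx k Nx_k; have [ones_k|Nones_k] := pselect (ones_below (q k).+1 x); first by left.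
right; split; last exact/keeps_ones_below/(xx N0 NN_N0).
by move=> N NN_N; have [|[]] := xx N NN_N k Nx_k.
Qed.

Hypotheses (p_zero : forall n, ~ s (p n) a) (q_one : forall n, s (q n) a).
Hypothesis s_free : distr_free s.

Lemma embed_subset N M : embed N `<=` embed M -> N `<=` M.
Proof.
move=> NM n Nn; apply: contrapT => NMn.
have Npq : p n <> q n by move=> pq; have := q_one n; rewrite -pq; apply: p_zero.
have [x x_prof] := distr_free_profile (fun i => i = p n \/ (s i a /\ i <> q n))
  (p n + q n).+1 s_free.
have x_prof_p i : (i <= p n)%N -> s i x <-> i = p n \/ (s i a /\ i <> q n).
  by move=> le_i; apply: x_prof; rewrite ltnS (leq_trans le_i) ?leq_addr.
have x_prof_q i : (i <= q n)%N -> s i x <-> i = p n \/ (s i a /\ i <> q n).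
  by move=> le_i; apply: x_prof; rewrite ltnS (leq_trans le_i) ?leq_addl.
have x_ones : ones_below (q n) x.
  move=> i lt_i sia; apply/(x_prof_q i (ltnW lt_i)).
  by right; split=> // eq_i; rewrite eq_i ltnn in lt_i.
have Nx_gains : ~ gains_below (p n) x.
  move=> [i lt_i [Nsia /(x_prof_p i (ltnW lt_i)) [eq_i|[]//]]].
  by rewrite eq_i ltnn in lt_i.
have Nsqx : ~ s (q n) x by move=> /(x_prof_q _ (leqnn _)) [/esym|[]].
suff /NM/(_ n Nx_gains) [/(_ (q n) (ltnSn _) (q_one n))/Nsqx[]|[/NMn[]]] : embed N x.
move=> k Nx_k; have [lt_kn|lt_nk|->] := ltngtP k n; last by right.
  by left; apply: ones_below_le x_ones; apply: q_homo.
exfalso; apply: Nx_k; exists (p n); first exact: p_homo.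
by split; [apply: p_zero | apply/(x_prof_p _ (leqnn _)); left].
Qed.

End Embedding.

Lemma complete_sublattice_range (I A : Type) (f : set I -> set A) :
  (forall NN, NN !=set0 -> f (\bigcup_(N in NN) N) = \bigcup_(N in NN) f N) ->
  (forall NN, NN !=set0 -> f (\bigcap_(N in NN) N) = \bigcap_(N in NN) f N) ->
  complete_sublattice (range f).
Proof.
move=> f_cup f_cap F F_f [U FU].
have F_image : F = f @` (f @^-1` F).
  apply/seteqP; split=> [X FX|]; last exact: image_preimage_subset.
  by have [N _ fN] := F_f X FX; exists N; rewrite // /preimage /= fN.
have [N0 _ fN0] := F_f U FU.
have ne : f @^-1` F !=set0 by exists N0; rewrite /preimage /= fN0.
by rewrite F_image bigcup_image bigcap_image -f_cup // -f_cap //; split; apply: imageT.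
Qed.

Theorem theorem7p10 (A : Type) (W : set (set A)) (s : nat -> set A) :
  pratt_comonoid W ->
  pratt_T1 W ->
  distr_free s ->
  pratt_generated_by W (range s) ->
  (exists g : set nat -> set A, (forall X, W (g X)) /\
      (forall X Y, g X = g Y -> X = Y)) /\
  (exists (L : set (set A)) (f : set nat -> set A),
      L `<=` W /\ complete_sublattice L /\
      (forall X, L (f X)) /\ (forall U, L U -> exists X, f X = U) /\
      (forall X Y, X `<=` Y <-> f X `<=` f Y)).
Proof.
move=> W_pratt W_T1 s_free W_gen.
have W_s i : W (s i) by apply: W_gen.2.1; exists i.
have [a _] := distr_free_profile (fun=> True) 0 s_free.
have [p [p_homo p_zero]] := unbounded_enum (zeros_unbounded W_T1 W_gen s_free a).
have [q [q_homo q_one]] := unbounded_enum (ones_unbounded W_T1 W_gen s_free a).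
have W_f N : W (embed s a p q N).
  apply: (W_embed a p_homo q_homo W_pratt W_s) => u v.
  exact: (generators_separate W_T1 W_gen).
have f_refl N M : embed s a p q N `<=` embed s a p q M -> N `<=` M.
  exact: (embed_subset p_homo q_homo p_zero q_one s_free).
split.
  exists (embed s a p q); split=> // N M fNM.
  by apply/seteqP; split; apply: f_refl; rewrite fNM.
exists (range (embed s a p q)), (embed s a p q); split; first by move=> _ [N _ <-].
split.
  exact: complete_sublattice_range (embed_bigcup s a p q_homo) (embed_bigcap s a p q).
split; first exact: imageT.
split; first by move=> _ [N _ <-]; exists N.
by move=> N M; split; [apply: embed_mono | apply: f_refl].
Qed.
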